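(* Let $\mathcal{T}$ be a $\operatorname{Hom}$-finite Krull–Schmidt triangulated category over an algebraically closed field and $\mathcal{I}$ an ideal of $\mathcal{T}$. (1) If $\mathcal{I}$ is contravariantly finite, then $(\mathcal{I},\mathrm{Gh}_{\mathcal{I}})$ is an ideal torsion pair. (2) If $\mathcal{I}$ is covariantly finite, then $(\mathrm{CoGh}_{\mathcal{I}},\mathcal{I})$ is an ideal torsion pair.
   Context: Composition of $f:X\to Y$, $g:Y\to Z$ is $gf$. An ideal: subgroups $\mathcal{I}(X,Y)\subseteq\operatorname{Hom}(X,Y)$ closed under composition with arbitrary morphisms. $\mathrm{Gh}_{\mathcal{I}}=\{f: fi=0\text{ for all composable } i\in\mathcal{I}\}$, $\mathrm{CoGh}_{\mathcal{I}}=\{f: if=0\text{ for all composable } i\in\mathcal{I}\}$. A pair $(\mathcal{A},\mathcal{B})$ of ideals is an ideal torsion pair if (a) for all $a:S\to T$ in $\mathcal{A}$ and $b:U\to V$ in $\mathcal{B}$, $bga=0$ for every $g:T\to U$; and (b) for each $T$ there is a triangle $X\xrightarrow{f}T\xrightarrow{g}Y\to X[1]$ with $f\in\mathcal{A}$, $g\in\mathcal{B}$. $\mathcal{I}$ is contravariantly (resp. covariantly) finite if every object $T$ has a right (resp. left) $\mathcal{I}$-approximation: a morphism in $\mathcal{I}$ ending (resp. starting) at $T$ through which every morphism of $\mathcal{I}$ ending (resp. starting) at $T$ factors. *)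

From HB Require Import structures.
From mathcomp Require Import all_boot all_algebra.
Set Implicit Arguments. Unset Strict Implicit. Unset Printing Implicit Defensive.
Import GRing.Theory.
Local Open Scope ring_scope.

(* Data of a k-linear category with a shift endofunctor.  Each Hom space is a
   finite-dimensional k-vector space (vectType k): this encodes Hom-finiteness. *)
Record PreTriCat (k : fieldType) := {
  tObj : Type;
  tHom : tObj -> tObj -> vectType k;
  tcomp : forall X Y Z, tHom Y Z -> tHom X Y -> tHom X Z;
  tid : forall X, tHom X X;
  tSh : tObj -> tObj;
  tshm : forall X Y, tHom X Y -> tHom (tSh X) (tSh Y) }.
Arguments tObj {k} _.
Arguments tHom {k} _ _ _.
Arguments tcomp {k p X Y Z} _ _.
Arguments tid {k p} X.
Arguments tSh {k p} _.
Arguments tshm {k p X Y} _.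

Section Defs.
Context {k : fieldType} (C : PreTriCat k).
Local Notation O := (tObj C).
Local Notation Hom := (tHom C).

Definition is_iso (X Y : O) (f : Hom X Y) :=
  exists g : Hom Y X, tcomp g f = tid X /\ tcomp f g = tid Y.

Definition is_zero_obj (Z : O) := tid Z = 0.

Definition biprod_of (X Y Z : O) :=
  exists (i1 : Hom X Z) (i2 : Hom Y Z) (p1 : Hom Z X) (p2 : Hom Z Y),
    [/\ tcomp p1 i1 = tid X, tcomp p2 i2 = tid Y, tcomp p1 i2 = 0,
        tcomp p2 i1 = 0 & tcomp i1 p1 + tcomp i2 p2 = tid Z].

Record CatAxioms : Prop := {
  comp_assoc : forall W X Y Z (h : Hom W X) (g : Hom X Y) (f : Hom Y Z),
      tcomp f (tcomp g h) = tcomp (tcomp f g) h;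
  comp_id_l : forall X Y (f : Hom X Y), tcomp (tid Y) f = f;
  comp_id_r : forall X Y (f : Hom X Y), tcomp f (tid X) = f;
  comp_lin_l : forall X Y Z (a : k) (f g : Hom Y Z) (h : Hom X Y),
      tcomp (a *: f + g) h = a *: tcomp f h + tcomp g h;
  comp_lin_r : forall X Y Z (a : k) (f : Hom Y Z) (g h : Hom X Y),
      tcomp f (a *: g + h) = a *: tcomp f g + tcomp f h;
  has_zero_obj : exists Z : O, is_zero_obj Z;
  has_biprod : forall X Y : O, exists Z : O, biprod_of X Y Z;
  shm_lin : forall X Y (a : k) (f g : Hom X Y),
      tshm (a *: f + g) = a *: tshm f + tshm g;
  shm_id : forall X : O, tshm (tid X) = tid (tSh X);
  shm_comp : forall X Y Z (f : Hom Y Z) (g : Hom X Y),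
      tshm (tcomp f g) = tcomp (tshm f) (tshm g);
  shm_fully_faithful : forall X Y : O, bijective (@tshm k C X Y);
  sh_ess_surj : forall Y : O, exists (X : O) (f : Hom (tSh X) Y), is_iso f }.

Record triangle := Tri {
  tA : O; tB : O; tC : O;
  tf : Hom tA tB; tg : Hom tB tC; th : Hom tC (tSh tA) }.

Definition tri_morph (T T' : triangle) (a : Hom (tA T) (tA T'))
    (b : Hom (tB T) (tB T')) (c : Hom (tC T) (tC T')) :=
  [/\ tcomp b (tf T) = tcomp (tf T') a,
      tcomp c (tg T) = tcomp (tg T') b &
      tcomp (tshm a) (th T) = tcomp (th T') c].

Definition rot (T : triangle) : triangle :=
  @Tri (tB T) (tC T) (tSh (tA T)) (tg T) (th T) (- tshm (tf T)).

Record TriAxioms (dist : triangle -> Prop) : Prop := {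
  TR1_iso : forall (T T' : triangle) a b c, @tri_morph T T' a b c ->
      is_iso a -> is_iso b -> is_iso c -> dist T -> dist T';
  TR1_id : forall (X Z : O), is_zero_obj Z ->
      dist (@Tri X X Z (tid X) 0 0);
  TR1_ext : forall (X Y : O) (f : Hom X Y),
      exists (Z : O) (g : Hom Y Z) (h : Hom Z (tSh X)), dist (Tri f g h);
  TR2 : forall T, dist T <-> dist (rot T);
  TR3 : forall (T T' : triangle) a b, dist T -> dist T' ->
      tcomp b (tf T) = tcomp (tf T') a -> exists c, @tri_morph T T' a b c;
  TR4 : forall (X Y Z : O) (f : Hom X Y) (g : Hom Y Z)
      (Z' : O) (u : Hom Y Z') (u' : Hom Z' (tSh X))
      (X' : O) (v : Hom Z X') (v' : Hom X' (tSh Y))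
      (Y' : O) (w : Hom Z Y') (w' : Hom Y' (tSh X)),
      dist (Tri f u u') -> dist (Tri g v v') -> dist (Tri (tcomp g f) w w') ->
      exists (a : Hom Z' Y') (b : Hom Y' X'),
        [/\ dist (Tri a b (tcomp (tshm u) v')),
            tcomp a u = tcomp w g, tcomp w' a = u',
            tcomp b w = v & tcomp v' b = tcomp (tshm f) w'] }.

(* Krull-Schmidt: every object is a finite direct sum of objects with local
   endomorphism rings. A ring is local iff it is nonzero and for each e, e or
   1 - e is invertible. *)
Definition local_end (X : O) :=
  tid X <> 0 /\ forall e : Hom X X, is_iso e \/ is_iso (tid X - e).

Fixpoint ks_decomp (X : O) (s : seq O) : Prop :=
  match s with
  | [::] => is_zero_obj X
  | Y :: s' => local_end Y /\ exists Z : O, biprod_of Y Z X /\ ks_decomp Z s'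
  end.

Definition KrullSchmidt := forall X : O, exists s : seq O, ks_decomp X s.

Definition ideal := forall X Y : O, Hom X Y -> Prop.

Definition is_ideal (I : ideal) :=
  [/\ forall X Y, I X Y 0,
      forall X Y (f g : Hom X Y), I X Y f -> I X Y g -> I X Y (f - g),
      forall W X Y (h : Hom W X) (f : Hom X Y), I X Y f -> I W Y (tcomp f h) &
      forall X Y Z (f : Hom X Y) (g : Hom Y Z), I X Y f -> I X Z (tcomp g f)].

Definition Gh (I : ideal) : ideal := fun Y Z f =>
  forall (S : O) (i : Hom S Y), I S Y i -> tcomp f i = 0.

Definition CoGh (I : ideal) : ideal := fun X Y f =>
  forall (Z : O) (i : Hom Y Z), I Y Z i -> tcomp i f = 0.

Definition contravariantly_finite (I : ideal) :=
  forall T : O, exists (X : O) (f : Hom X T), I X T f /\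
    forall (S : O) (i : Hom S T), I S T i -> exists h : Hom S X, i = tcomp f h.

Definition covariantly_finite (I : ideal) :=
  forall T : O, exists (Y : O) (f : Hom T Y), I T Y f /\
    forall (S : O) (i : Hom T S), I T S i -> exists h : Hom Y S, i = tcomp h f.

Definition ideal_torsion_pair (dist : triangle -> Prop) (A B : ideal) :=
  [/\ is_ideal A, is_ideal B,
      (forall (S T U V : O) (a : Hom S T) (b : Hom U V) (g : Hom T U),
          A S T a -> B U V b -> tcomp b (tcomp g a) = 0) &
      (forall T : O, exists (X Y : O) (f : Hom X T) (g : Hom T Y)
          (h : Hom Y (tSh X)), [/\ A X T f, B T Y g & dist (Tri f g h)])].

End Defs.

Record TriCat (k : fieldType) := {
  tpre :> PreTriCat k;
  dist : triangle tpre -> Prop;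
  tcat_ax : CatAxioms tpre;
  ttri_ax : TriAxioms dist }.
Arguments dist {k t}.

(* The triangle X -> T -> Y -> X[1] required of a torsion pair is simply
   the completion of an approximation.  For (1) take a right
   I-approximation f : X -> T and complete it to X -f-> T -g-> Y -> X[1];
   any i in I ending at T factors as f h, so g i = g f h = 0 and g is an
   I-ghost.  For (2) take a left I-approximation f : T -> Y and use
   rotation together with the fact that the shift is an equivalence to fit
   f as the second map of a triangle X -u-> T -f-> Y -> X[1]; dually u is
   an I-coghost.  Orthogonality of the two ideals is immediate from the
   definitions. *)
From Pilot Require Import Defs.
From mathcomp Require Import all_boot all_algebra.
Import GRing.Theory.
Local Open Scope ring_scope.

Section TriangulatedCategory.
Variables (k : fieldType) (T : TriCat k).
Local Notation O := (tObj T).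
Local Notation Hom := (tHom T).
Local Notation CA := (tcat_ax T).
Local Notation TA := (ttri_ax T).

Lemma comp0l (X Y Z : O) (h : Hom X Y) : tcomp (0 : Hom Y Z) h = 0.
Proof.
by have := comp_lin_l CA (-1) (0 : Hom Y Z) 0 h; rewrite !scaleN1r !addNr.
Qed.

Lemma comp0r (X Y Z : O) (f : Hom Y Z) : tcomp f (0 : Hom X Y) = 0.
Proof.
by have := comp_lin_r CA (-1) f (0 : Hom X Y) 0; rewrite !scaleN1r !addNr.
Qed.

Lemma compBl (X Y Z : O) (f g : Hom Y Z) (h : Hom X Y) :
  tcomp (f - g) h = tcomp f h - tcomp g h.
Proof. by rewrite addrC -scaleN1r (comp_lin_l CA) scaleN1r addrC. Qed.

Lemma compBr (X Y Z : O) (f : Hom Y Z) (g h : Hom X Y) :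
  tcomp f (g - h) = tcomp f g - tcomp f h.
Proof. by rewrite addrC -scaleN1r (comp_lin_r CA) scaleN1r addrC. Qed.

Lemma shm0 (X Y : O) : tshm (0 : Hom X Y) = 0.
Proof. by have := shm_lin CA (-1) (0 : Hom X Y) 0; rewrite !scaleN1r !addNr. Qed.

Lemma shmN (X Y : O) (f : Hom X Y) : tshm (- f) = - tshm f.
Proof. by have := shm_lin CA (-1) f 0; rewrite shm0 !scaleN1r !addr0. Qed.

Lemma iso_id (X : O) : is_iso (tid X).
Proof. by exists (tid X); rewrite (comp_id_l CA). Qed.

(* Compare the triangle with X -id-> X -> 0 -> X[1] via TR3. *)
Lemma dist_comp_eq0 {tr : triangle T} : dist tr -> tcomp (tg tr) (tf tr) = 0.
Proof.
case: tr => A B C f g h /= D.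
have [Z Z0] := has_zero_obj CA.
have [c [_ gf_c0 _]] := TR3 TA (TR1_id TA A Z0) D (erefl (tcomp f (tid A))).
by move: gf_c0 => /= <-; rewrite comp0r.
Qed.

Lemma dist_iso_cone (X Y Z W : O) (f : Hom X Y) (g : Hom Y Z)
    (h : Hom Z (tSh X)) (phi : Hom W Z) (psi : Hom Z W) :
  tcomp psi phi = tid W -> tcomp phi psi = tid Z -> dist (Tri f g h) ->
  dist (Tri f (tcomp psi g) (tcomp h phi)).
Proof.
move=> psi_phi phi_psi.
apply: (@TR1_iso _ _ _ TA (Tri f g h) (Tri f (tcomp psi g) (tcomp h phi)) (tid X) (tid Y) psi).
- split=> /=; rewrite ?(comp_id_l CA) ?(comp_id_r CA) //.
  by rewrite (shm_id CA) (comp_id_l CA) -(comp_assoc CA) phi_psi (comp_id_r CA).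
- exact: iso_id.
- exact: iso_id.
- by exists phi.
Qed.

(* To rotate backwards, replace the cone C of g by an isomorphic X[1] and
   lift the resulting map X[1] -> Y[1] along the fully faithful shift. *)
Lemma dist_ext_left {Y Z : O} (g : Hom Y Z) :
  exists (X : O) (f : Hom X Y) (h : Hom Z (tSh X)), dist (Tri f g h).
Proof.
have [C [w [v D]]] := TR1_ext TA g.
have [X [phi [psi [psi_phi phi_psi]]]] := sh_ess_surj CA C.
have [shm_inv _ shm_invK] := shm_fully_faithful CA X Y.
exists X, (- shm_inv (tcomp v phi)), (tcomp psi w).
apply/(TR2 TA); rewrite /Defs.rot /= shmN opprK shm_invK.
exact: dist_iso_cone.
Qed.

Definition is_right_approx (I : ideal T) {X Y : O} (f : Hom X Y) :=
  I X Y f /\ forall (S : O) (i : Hom S Y), I S Y i -> exists h, i = tcomp f h.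

Definition is_left_approx (I : ideal T) {X Y : O} (f : Hom X Y) :=
  I X Y f /\ forall (S : O) (i : Hom X S), I X S i -> exists h, i = tcomp h f.

Variables (I : ideal T) (HI : is_ideal I).

Lemma Gh_ideal : is_ideal (Gh I).
Proof.
case: HI => _ _ _ I_compl; split.
- by move=> X Y S i _; rewrite comp0l.
- by move=> X Y f g f_gh g_gh S i Ii; rewrite compBl f_gh // g_gh // subrr.
- move=> W X Y h f f_gh S i Ii.
  by rewrite -(comp_assoc CA); apply/f_gh/I_compl.
- by move=> X Y Z f g f_gh S i Ii; rewrite -(comp_assoc CA) f_gh // comp0r.
Qed.

Lemma CoGh_ideal : is_ideal (CoGh I).
Proof.
case: HI => _ _ I_compr _; split.
- by move=> X Y S i _; rewrite comp0r.
- by move=> X Y f g f_cogh g_cogh S i Ii; rewrite compBr f_cogh // g_cogh // subrr.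
- by move=> W X Y h f f_cogh S i Ii; rewrite (comp_assoc CA) f_cogh // comp0l.
- move=> X Y Z f g f_cogh S i Ii.
  by rewrite (comp_assoc CA); apply/f_cogh/I_compr.
Qed.

Lemma Gh_dist_right_approx (X Y Z : O) (f : Hom X Y) (g : Hom Y Z)
    (h : Hom Z (tSh X)) :
  is_right_approx I f -> dist (Tri f g h) -> Gh I g.
Proof.
move=> [_ f_approx] D S i /f_approx [j ->].
by rewrite (comp_assoc CA) (dist_comp_eq0 D) comp0l.
Qed.

Lemma CoGh_dist_left_approx (X Y Z : O) (f : Hom X Y) (g : Hom Y Z)
    (h : Hom Z (tSh X)) :
  is_left_approx I g -> dist (Tri f g h) -> CoGh I f.
Proof.
move=> [_ g_approx] D S i /g_approx [j ->].
by rewrite -(comp_assoc CA) (dist_comp_eq0 D) comp0r.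
Qed.

Lemma ideal_torsion_pair_Gh :
  contravariantly_finite I -> ideal_torsion_pair dist I (Gh I).
Proof.
move=> I_contra; split=> //; first exact: Gh_ideal.
- by case: HI => _ _ _ I_compl S X U V a b g Ia b_gh; apply/b_gh/I_compl.
- move=> Y; have [X [f f_approx]] := I_contra Y.
  have [Z [g [h D]]] := TR1_ext TA f.
  exists X, Z, f, g, h; split=> //; first by case: f_approx.
  exact: Gh_dist_right_approx D.
Qed.

Lemma ideal_torsion_pair_CoGh :
  covariantly_finite I -> ideal_torsion_pair dist (CoGh I) I.
Proof.
move=> I_co; split=> //; first exact: CoGh_ideal.
- case: HI => _ _ I_compr _ S X U V a b g a_cogh Ib.
  by rewrite (comp_assoc CA); apply/a_cogh/I_compr.
- move=> Y; have [Z [g g_approx]] := I_co Y.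
  have [X [f [h D]]] := dist_ext_left g.
  exists X, Z, f, g, h; split=> //; last by case: g_approx.
  exact: CoGh_dist_left_approx D.
Qed.

End TriangulatedCategory.

Theorem lemma2p6 (k : closedFieldType) (T : TriCat k)
    (HKS : KrullSchmidt T) (I : ideal T) (HI : is_ideal I) :
  (contravariantly_finite I -> ideal_torsion_pair (@dist k T) I (Gh I)) /\
  (covariantly_finite I -> ideal_torsion_pair (@dist k T) (CoGh I) I).
Proof.
split; [exact: ideal_torsion_pair_Gh | exact: ideal_torsion_pair_CoGh].
Qed.
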